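(* Let $\pi_1,\dots,\pi_K\ge0$ with $\sum_k\pi_k=1$, $g_1,\dots,g_K$ probability densities on $\mathbb{R}^d$, $f=\sum_k\pi_kg_k$, and $x_1,\dots,x_N\in\mathbb{R}^d$ with $0<f(x_n)<\infty$ for all $n$. Let $L\ge1$ and let $Q^{(l)}_k\ge0$ ($k=1,\dots,K$, $l=1,\dots,L$) satisfy $\sum_{l=1}^LQ^{(l)}_k=1$ for every $k$. Define $$\rho_l=\sum_{k=1}^KQ^{(l)}_k\pi_k,\qquad \phi^{(l)}_k=\frac{Q^{(l)}_k\pi_k}{\rho_l},\qquad h_l=\sum_{k=1}^K\phi^{(l)}_kg_k,$$ and assume $\rho_l>0$ and $h_l(x_n)>0$ for all $l,n$ (so $f=\sum_l\rho_lh_l$). Let $$w^{(l)}_n=\frac{\rho_lh_l(x_n)}{f(x_n)},\qquad W_l=\frac1N\sum_{n=1}^Nw^{(l)}_n.$$ Then $$\mathrm{MC}(\{\pi_k,g_k\}_{k=1}^K;\{x_n\}_{n=1}^N)=\mathrm{MC}(\{\rho_l,h_l\}_{l=1}^L;\{x_n\}_{n=1}^N)+\sum_{l=1}^LW_l\cdot\mathrm{MC}(\{\phi^{(l)}_k,g_k\}_{k=1}^K;\{x_n,w^{(l)}_n\}_{n=1}^N).$$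
   Context: For mixture weights $\pi_k\ge 0$ summing to one, densities $g_k$, $f=\sum_k \pi_k g_k$, and data $x_1,\dots,x_N$ with $0<f(x_n)<\infty$ for all $n$, the mixture complexity is $$\mathrm{MC}(\{\pi_k,g_k\}_{k=1}^K;\{x_n\}_{n=1}^N)=\frac1N\sum_{n=1}^N\sum_{k=1}^K\frac{\pi_k g_k(x_n)}{f(x_n)}\log\frac{g_k(x_n)}{f(x_n)},$$ and, for nonnegative data weights $w_1,\dots,w_N$ with $\sum_n w_n>0$, the weighted mixture complexity is $$\mathrm{MC}(\{\pi_k,g_k\}_{k=1}^K;\{x_n,w_n\}_{n=1}^N)=\frac{1}{\sum_{n'=1}^Nw_{n'}}\sum_{n=1}^Nw_n\sum_{k=1}^K\frac{\pi_k g_k(x_n)}{f(x_n)}\log\frac{g_k(x_n)}{f(x_n)},$$ in both cases with the convention that a term with $\pi_k g_k(x_n)=0$ equals $0$. *)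

From mathcomp Require Import all_boot all_order all_algebra.
From mathcomp Require Import all_classical all_reals exp.
Set Implicit Arguments. Unset Strict Implicit. Unset Printing Implicit Defensive.
Import Order.TTheory GRing.Theory Num.Theory.
Local Open Scope ring_scope.

Definition mixf {R : realType} {T : Type} (K : nat)
  (pi : 'I_K -> R) (g : 'I_K -> T -> R) (x : T) : R :=
  \sum_(k < K) pi k * g k x.

Definition mc_term {R : realType} {T : Type} (K : nat)
  (pi : 'I_K -> R) (g : 'I_K -> T -> R) (x : T) : R :=
  \sum_(k < K)
    (if pi k * g k x == 0 then 0
     else pi k * g k x / mixf pi g x * ln (g k x / mixf pi g x)).

Definition MC {R : realType} {T : Type} (K N : nat)
  (pi : 'I_K -> R) (g : 'I_K -> T -> R) (xs : 'I_N -> T) : R :=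
  (N%:R)^-1 * \sum_(n < N) mc_term pi g (xs n).

Definition wMC {R : realType} {T : Type} (K N : nat)
  (pi : 'I_K -> R) (g : 'I_K -> T -> R) (xs : 'I_N -> T) (w : 'I_N -> R) : R :=
  (\sum_(n < N) w n)^-1 * \sum_(n < N) w n * mc_term pi g (xs n).

From mathcomp Require Import all_boot all_order all_algebra.
From mathcomp Require Import all_classical all_reals exp.
From mathcomp Require Import ring.
Set Implicit Arguments. Unset Strict Implicit. Unset Printing Implicit Defensive.
Import Order.TTheory GRing.Theory Num.Theory.
Local Open Scope ring_scope.

(* The identity holds pointwise, before averaging over the data.  Fix a point
   x, write a_k = pi_k g_k(x) and f = f(x).  The zero-convention in MC is
   harmless (a vanishing term is 0 anyway), so MC is a plain sum of
   a_k/f * ln(g_k/f).  Splitting each a_k along sum_l Q_lk = 1 gives terms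
   Q_lk a_k / f * ln(g_k/f), and whenever such a term is nonzero g_k(x) > 0,
   so ln(g_k/f) = ln(h_l/f) + ln(g_k/h_l).  Since rho_l h_l(x) = sum_k Q_lk a_k
   and rho_l phi_lk = Q_lk pi_k, the ln(h_l/f) part sums to the merged
   complexity term and the ln(g_k/h_l) part to w_l(x) times the complexity
   term of the l-th sub-mixture (whose mixture density is h_l). *)

Section Merging.
Variables (R : realType) (T : Type) (K L : nat).
Variables (pi : 'I_K -> R) (g : 'I_K -> T -> R) (Q : 'I_L -> 'I_K -> R).

Definition merged_weight (l : 'I_L) : R := \sum_(k < K) Q l k * pi k.

Definition within_weight (l : 'I_L) (k : 'I_K) : R :=
  Q l k * pi k / merged_weight l.

Definition merged_density (l : 'I_L) (x : T) : R :=
  \sum_(k < K) within_weight l k * g k x.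

Hypothesis Q_partition : forall k, \sum_(l < L) Q l k = 1.
Hypothesis merged_weight_neq0 : forall l, merged_weight l != 0.

Lemma merged_mass (l : 'I_L) (x : T) :
  merged_weight l * merged_density l x = \sum_(k < K) Q l k * (pi k * g k x).
Proof.
rewrite /merged_density big_distrr; apply: eq_bigr => k _ /=.
by rewrite /within_weight; field; apply: merged_weight_neq0.
Qed.

Lemma mixf_merged (x : T) :
  mixf merged_weight merged_density x = mixf pi g x.
Proof.
rewrite /mixf (eq_bigr _ (fun l _ => merged_mass l x)) exchange_big /=.
by apply: eq_bigr => k _; rewrite -big_distrl /= Q_partition mul1r.
Qed.

End Merging.

Lemma mc_termE (R : realType) (T : Type) (K : nat)
    (pi : 'I_K -> R) (g : 'I_K -> T -> R) (x : T) :
  mc_term pi g x =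
  \sum_(k < K) pi k * g k x / mixf pi g x * ln (g k x / mixf pi g x).
Proof. by apply: eq_bigr => k _; case: eqP => [->|_]; rewrite ?mul0r. Qed.

Lemma ln_ratio_chain (R : realType) (a b c : R) :
  0 < a -> 0 < b -> 0 < c -> ln (b / a) + ln (c / b) = ln (c / a).
Proof.
move=> a0 b0 c0; rewrite -lnM ?posrE ?divr_gt0 //.
by congr ln; field; rewrite !gt_eqF.
Qed.

Section PointwiseChainRule.
Variables (R : realType) (T : Type) (K L : nat).
Variables (pi : 'I_K -> R) (g : 'I_K -> T -> R) (Q : 'I_L -> 'I_K -> R).
Variable x : T.
Hypothesis Q_partition : forall k, \sum_(l < L) Q l k = 1.
Hypothesis merged_weight_neq0 : forall l, merged_weight pi Q l != 0.
Hypothesis g_ge0 : forall k, 0 <= g k x.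
Hypothesis mixf_gt0 : 0 < mixf pi g x.
Hypothesis merged_density_gt0 : forall l, 0 < merged_density pi g Q l x.

Let rho := merged_weight pi Q.
Let h := merged_density pi g Q.
Let f := mixf pi g x.

Lemma merged_term_split :
  mc_term rho h x =
  \sum_(l < L) \sum_(k < K) Q l k * (pi k * g k x) / f * ln (h l x / f).
Proof.
rewrite mc_termE mixf_merged //; apply: eq_bigr => l _.
by rewrite merged_mass // !big_distrl.
Qed.

Lemma within_term_split (l : 'I_L) :
  rho l * h l x / f * mc_term (within_weight pi Q l) g x =
  \sum_(k < K) Q l k * (pi k * g k x) / f * ln (g k x / h l x).
Proof.
rewrite mc_termE big_distrr; apply: eq_bigr => k _ /=.
have hl0 := merged_density_gt0 l; rewrite -/(h l x) in hl0.
rewrite -[mixf _ g x]/(h l x) /within_weight -/rho.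
by field; rewrite (gt_eqF hl0) (gt_eqF mixf_gt0) merged_weight_neq0.
Qed.

Lemma split_term_chain (l : 'I_L) (k : 'I_K) :
  Q l k * (pi k * g k x) / f * ln (g k x / f) =
  Q l k * (pi k * g k x) / f * ln (h l x / f) +
  Q l k * (pi k * g k x) / f * ln (g k x / h l x).
Proof.
have [->|mass_neq0] := eqVneq (Q l k * (pi k * g k x)) 0.
  by rewrite !mul0r addr0.
have gk_gt0 : 0 < g k x.
  by rewrite lt_def g_ge0 andbT; apply: contraNneq mass_neq0 => ->; rewrite !mulr0.
by rewrite -mulrDr ln_ratio_chain.
Qed.

Lemma mc_term_chain_rule :
  mc_term pi g x =
  mc_term rho h x +
  \sum_(l < L) rho l * h l x / f * mc_term (within_weight pi Q l) g x.
Proof.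
rewrite merged_term_split (eq_bigr _ (fun l _ => within_term_split l)).
rewrite -big_split /=; under eq_bigr => l _ do rewrite -big_split /=.
rewrite exchange_big mc_termE /=; apply: eq_bigr => k _.
under eq_bigr => l _ do rewrite -split_term_chain.
by rewrite -!big_distrl /= Q_partition mul1r.
Qed.

End PointwiseChainRule.

Lemma sum_ord_gt0 (R : realType) (N : nat) (w : 'I_N -> R) :
  (0 < N)%N -> (forall n, 0 < w n) -> 0 < \sum_(n < N) w n.
Proof.
move=> N_gt0 w_gt0; rewrite (bigD1 (Ordinal N_gt0)) //=.
by rewrite ltr_pwDl // sumr_ge0 // => n _; apply: ltW.
Qed.

Lemma wMC_rescale (R : realType) (T : Type) (K N : nat)
    (pi : 'I_K -> R) (g : 'I_K -> T -> R) (xs : 'I_N -> T) (w : 'I_N -> R) :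
  \sum_(n < N) w n != 0 ->
  ((N%:R)^-1 * \sum_(n < N) w n) * wMC pi g xs w =
  (N%:R)^-1 * \sum_(n < N) w n * mc_term pi g (xs n).
Proof. by move=> mass_neq0; rewrite /wMC -mulrA mulVKf. Qed.

Theorem theorem1 (R : realType) (d K N L : nat)
  (pi : 'I_K -> R) (g : 'I_K -> 'rV[R]_d -> R) (xs : 'I_N -> 'rV[R]_d)
  (Q : 'I_L -> 'I_K -> R)
  (hpi0 : forall k, 0 <= pi k)
  (hpi1 : \sum_(k < K) pi k = 1)
  (hg0 : forall k y, 0 <= g k y)
  (hN : (0 < N)%N)
  (hf : forall n, 0 < mixf pi g (xs n))
  (hL : (0 < L)%N)
  (hQ0 : forall l k, 0 <= Q l k)
  (hQ1 : forall k, \sum_(l < L) Q l k = 1) :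
  let rho := fun l : 'I_L => \sum_(k < K) Q l k * pi k in
  let phi := fun (l : 'I_L) (k : 'I_K) => Q l k * pi k / rho l in
  let h := fun (l : 'I_L) (y : 'rV[R]_d) => \sum_(k < K) phi l k * g k y in
  let w := fun (l : 'I_L) (n : 'I_N) =>
             rho l * h l (xs n) / mixf pi g (xs n) in
  let W := fun l : 'I_L => (N%:R)^-1 * \sum_(n < N) w l n in
  (forall l, 0 < rho l) ->
  (forall l n, 0 < h l (xs n)) ->
  MC pi g xs
  = MC rho h xs + \sum_(l < L) W l * wMC (phi l) g xs (w l).
Proof.
move=> rho phi h w W rho_gt0 h_gt0.
have rho_neq0 l : merged_weight pi Q l != 0 by rewrite gt_eqF ?rho_gt0.
have chain n : mc_term pi g (xs n) = mc_term rho h (xs n) +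
    \sum_(l < L) w l n * mc_term (phi l) g (xs n).
  exact: (mc_term_chain_rule hQ1 rho_neq0 (hg0^~ (xs n)) (hf n) (h_gt0^~ n)).
rewrite /MC (eq_bigr _ (fun n _ => chain n)) big_split /= mulrDr.
congr (_ + _); rewrite exchange_big big_distrr /=; apply: eq_bigr => l _.
rewrite /W wMC_rescale //; apply/lt0r_neq0/sum_ord_gt0 => // n.
by rewrite divr_gt0 ?mulr_gt0.
Qed.
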